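(* Let $n\ge 1$ and let $p=p_1\cdots p_n$ be a permutation of $\{1,\dots,n\}$ with $p_n=1$. Then the following are equivalent: (A) $p$ is strongly 312-avoiding; (B) there is an integer $k$ with $n/2\le k\le n$ such that $p=(k+1)(k+2)\cdots n\; k(k-1)\cdots 2\,1$, i.e. $p$ lists the $n-k$ largest values in increasing order followed by the $k$ smallest values in decreasing order.
   Context: Permutations are written in one-line notation $p=p_1\cdots p_n$ with $p_i=p(i)$. $p$ contains a pattern $q=q_1\cdots q_m$ if there are indices $i_1<\cdots<i_m$ with $p_{i_r}<p_{i_s}$ iff $q_r<q_s$; otherwise $p$ avoids $q$. $p^2(i)=p(p(i))$. A permutation $p$ is strongly $q$-avoiding if both $p$ and $p^2$ avoid $q$. *)

From mathcomp Require Import all_boot all_fingroup.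
Set Implicit Arguments. Unset Strict Implicit. Unset Printing Implicit Defensive.

(* One-line notation: for p : {perm 'I_n}, position i (0-based) holds the
   value (val (p i)).+1 in {1..n}.  Patterns are given in one-line notation
   as sequences of naturals. *)
Definition perm_val n (p : {perm 'I_n}) (i : nat) : nat :=
  match insub i with Some j => (val (p j)).+1 | None => 0 end.

Definition contains n (p : {perm 'I_n}) (q : seq nat) : Prop :=
  exists f : 'I_(size q) -> 'I_n,
    (forall r s : 'I_(size q), r < s -> f r < f s) /\
    (forall r s : 'I_(size q),
        (val (p (f r)) < val (p (f s))) = (nth 0 q r < nth 0 q s)).

Definition avoids n (p : {perm 'I_n}) (q : seq nat) : Prop := ~ contains p q.

Definition strongly_avoids n (p : {perm 'I_n}) (q : seq nat) : Prop :=
  avoids p q /\ avoids (p * p)%g q.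

From mathcomp Require Import all_boot all_fingroup zify.

(* We work with the 0-based one-line word P : nat -> nat of a permutation of
   {0, ..., N-1}, so that the hypothesis p_n = 1 reads P (N-1) = 0.

   Let M be the position of the maximal value N-1.
   Avoidance of 312 by P forces P to decrease after M, and avoidance by P o P
   (whose value at M is the minimum 0) forces P o P to increase across M.
   Counting arguments then show that every value at a position <= M exceeds M,
   so the values 0..M fill the last M+1 positions in decreasing order.  Reading
   P o P on these positions shows that P increases before M, and a last count
   pins down P 0 = N-1-M.  Hence P is the two-block word with k = N-1-M. *)

Lemma inj_interval_card (f : nat -> nat) a b c d :
  (forall x, a <= x < b -> c <= f x < d) ->
  (forall x y, a <= x < b -> a <= y < b -> f x = f y -> x = y) ->
  b - a <= d - c.
Proof.
move=> f_in f_inj.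
have g_lt (i : 'I_(b - a)) : f (a + i) - c < d - c.
  by have := f_in (a + i); have := ltn_ord i; lia.
pose g (i : 'I_(b - a)) := Ordinal (g_lt i).
have g_inj : injective g.
  move=> i j /(congr1 val) /= gij; apply: val_inj => /=.
  have := f_in (a + i); have := f_in (a + j); have := f_inj (a + i) (a + j).
  have := ltn_ord i; have := ltn_ord j; lia.
by have := leq_card g g_inj; rewrite !card_ord.
Qed.

Lemma incr_gap (f : nat -> nat) a b :
  (forall x y, a <= x -> x < y -> y <= b -> f x < f y) ->
  forall x y, a <= x -> x <= y -> y <= b -> f x + (y - x) <= f y.
Proof.
move=> f_incr x y ax /subnKC <-; rewrite addKn.
elim: (y - x) => [|d IH] yb; first by rewrite !addn0.
have := IH ltac:(lia); have := f_incr (x + d) (x + d.+1); rewrite !addnS; lia.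
Qed.

Lemma decr_gap (f : nat -> nat) a b :
  (forall x y, a <= x -> x < y -> y <= b -> f y < f x) ->
  forall x y, a <= x -> x <= y -> y <= b -> f y + (y - x) <= f x.
Proof.
move=> f_decr x y ax /subnKC <-; rewrite addKn.
elim: (y - x) => [|d IH] yb; first by rewrite !addn0.
have := IH ltac:(lia); have := f_decr (x + d) (x + d.+1); rewrite !addnS; lia.
Qed.

Definition avoids312 (N : nat) (f : nat -> nat) : Prop :=
  forall i j l, i < j -> j < l -> l < N -> f j < f l -> f l < f i -> False.

(* The 0-based form of the shape (k+1)(k+2)...n k(k-1)...1. *)
Definition two_block (N k : nat) (f : nat -> nat) : Prop :=
  forall i, i < N -> f i = if i < N - k then k + i else N - 1 - i.

Section StronglyAvoidingShape.

Variables (N : nat) (P : nat -> nat).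
Hypothesis P_lt : forall i, i < N -> P i < N.
Hypothesis P_inj : forall i j, i < N -> j < N -> P i = P j -> i = j.
Hypothesis P_surj : forall v, v < N -> exists2 i, i < N & P i = v.
Hypothesis N_gt1 : 1 < N.
Hypothesis P_last : P (N - 1) = 0.
Hypothesis avP : avoids312 N P.
Hypothesis avPP : avoids312 N (fun i => P (P i)).

Variable M : nat.
Hypothesis M_lt : M < N.
Hypothesis PM : P M = N - 1.

Let k := N - 1 - M.

Lemma max_before_last : M < N - 1.
Proof.
have : M != N - 1 by apply/eqP => eM; move: PM; rewrite eM P_last; lia.
lia.
Qed.

Lemma PP_inj i j : i < N -> j < N -> P (P i) = P (P j) -> i = j.
Proof. by move=> hi hj /P_inj PPij; apply: P_inj; rewrite // PPij // P_lt. Qed.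

Lemma PP_max : P (P M) = 0.
Proof. by rewrite PM. Qed.

(* An ascent after M would form a 312 with the maximum. *)
Lemma decr_after_max x y : M < x -> x < y -> y <= N - 1 -> P y < P x.
Proof.
move=> Mx xy yN; have {}yN : y < N by lia.
have := avP M x y Mx xy yN; have := P_inj x y; have := P_inj y M.
have := P_lt y; lia.
Qed.

(* P o P takes its minimum at M, so it cannot descend across M. *)
Lemma PP_incr_across_max i j : i < M -> M < j -> j < N -> P (P i) < P (P j).
Proof.
move=> iM Mj jN; have := PP_max.
have := avPP i M j iM Mj jN; have := PP_inj i j; have := PP_inj j M; lia.
Qed.

Lemma M_after_max y : y < N -> P y = M -> M < y.
Proof.
move=> yN Py.
have : y != M.
  by apply/eqP => eyM; move: Py; rewrite eyM PM; have := max_before_last; lia.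
have : ~ y < M.
  move=> yM; have := PP_incr_across_max y (N - 1) yM max_before_last ltac:(lia).
  by rewrite Py PM; have := P_lt (P (N - 1)) (P_lt (N - 1) ltac:(lia)); lia.
lia.
Qed.

(* If P 0 <= M, then for x < M we would have 0 = P (P M) < P (P x) <
   P (P (N - 1)) = P 0 <= M: M distinct values in [1, M). *)
Lemma max_lt_first : M < P 0.
Proof.
have [M0|M_gt0] := posnP M; first by rewrite -M0 PM; lia.
have : ~ P 0 <= M; last lia.
move=> P0M.
have PP_last : P (P (N - 1)) = P 0 by rewrite P_last.
have PP_range x : 0 <= x < M -> 1 <= P (P x) < M.
  move=> xM; have := max_before_last; have := PP_incr_across_max x (N - 1).
  have := PP_inj x M; have := PP_max; lia.
have PP_inj_on x y : 0 <= x < M -> 0 <= y < M -> P (P x) = P (P y) -> x = y.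
  by move=> xM yM; apply: PP_inj; lia.
by have := inj_interval_card _ _ _ _ _ PP_range PP_inj_on; lia.
Qed.

(* Every value at a position up to M exceeds M: a value below M at a
   position 0 < i < M would form a 312 with positions 0 and P^-1 (M). *)
Lemma prefix_above_max i : i <= M -> M < P i.
Proof.
move=> iM.
have [-> | [-> | /andP[i_gt0 i_ltM]]] : i = M \/ i = 0 \/ 0 < i < M by lia.
- by rewrite PM; have := max_before_last; lia.
- exact: max_lt_first.
have [y yN Py] := P_surj M M_lt.
have My := M_after_max y yN Py.
have : P i != M by apply/eqP => PiM; have := P_inj i y; lia.
have := avP 0 i y i_gt0 (ltn_trans i_ltM My) yN; have := max_lt_first.
have := P_inj i y; lia.
Qed.

(* Positions 0..M are mapped injectively above M. *)
Lemma prefix_short : M.+1 <= N - M.+1.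
Proof.
apply: (inj_interval_card P 0 M.+1 M.+1 N).
  by move=> x xM; have := prefix_above_max x; have := P_lt x; lia.
by move=> x y xM yM; apply: P_inj; lia.
Qed.

(* The decreasing run after M ends at 0. *)
Lemma above_reverse x : M < x < N -> N - 1 - x <= P x.
Proof.
move=> /andP[Mx xN].
by have := decr_gap _ _ _ decr_after_max x (N - 1); rewrite P_last; lia.
Qed.

Lemma suffix_reverse j : j <= M -> P (N - 1 - j) = j.
Proof.
elim/ltn_ind: j => v IH vM.
have [y yN Py] := P_surj v ltac:(lia).
have My : M < y by have := prefix_above_max y; lia.
have y_ge : N - 1 - v <= y by have := above_reverse y; lia.
have y_le : y <= N - 1 - v.
  rewrite leqNgt; apply/negP => yv.
  by have := IH (N - 1 - y) ltac:(lia) ltac:(lia); rewrite subKn; lia.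
by have -> : N - 1 - v = y by lia.
Qed.

(* P o P reads P backwards on the last M+1 positions, after the value
   P (P k) = N - 1; so an inversion before M would give a 312 in P o P. *)
Lemma incr_before_max i j : i < j -> j < M -> P i < P j.
Proof.
move=> ij jM.
have PPk : P (P k) = N - 1 by rewrite /k suffix_reverse // PM.
have := avPP k (N - 1 - j) (N - 1 - i); rewrite PPk !suffix_reverse; try lia.
have := P_inj i j; have := P_inj i M; have := P_lt i; rewrite /k; lia.
Qed.

(* P (P 0) <= M, by counting the values P (P x) > P (P 0) for x > M; hence
   P 0 is one of the positions k, ..., N - 1 described by suffix_reverse. *)
Lemma first_ge : k <= P 0.
Proof.
have [M0|M_gt0] := posnP M; first by rewrite /k -M0 PM; lia.
have : ~ M < P (P 0).
  move=> MPP0.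
  have PP_range x : M.+1 <= x < N -> (P (P 0)).+1 <= P (P x) < N.
    move=> xN; have := PP_incr_across_max 0 x.
    have := P_lt (P x) (P_lt x ltac:(lia)); lia.
  have PP_inj_on x y :
      M.+1 <= x < N -> M.+1 <= y < N -> P (P x) = P (P y) -> x = y.
    by move=> xN yN; apply: PP_inj; lia.
  have := inj_interval_card _ _ _ _ _ PP_range PP_inj_on.
  by have := P_lt (P 0) (P_lt 0 ltac:(lia)); lia.
move=> PP0M; have := suffix_reverse (P (P 0)) ltac:(lia).
by move/P_inj; have := P_lt 0; rewrite /k; lia.
Qed.

Lemma prefix_values i : i < M -> P i = k + i.
Proof.
move=> iM.
have incr x y : 0 <= x -> x < y -> y <= M - 1 -> P x < P y.
  by move=> _ xy yM; apply: incr_before_max; lia.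
have := incr_gap _ _ _ incr 0 i; have := incr_gap _ _ _ incr i (M - 1).
have := first_ge; have := P_inj (M - 1) M; have := P_lt (M - 1); rewrite /k.
lia.
Qed.

(* The values k, ..., N-1 are used up by the prefix, so after M the
   decreasing run starts below k and is forced to be N-1-x. *)
Lemma suffix_values x : M < x < N -> P x = N - 1 - x.
Proof.
move=> /andP[Mx xN].
have PMk : P M.+1 < k.
  have : ~ k <= P M.+1; last lia.
  move=> kP.
  have : P M.+1 != N - 1 by apply/eqP; rewrite -PM => /P_inj; lia.
  have := P_lt M.+1; have := prefix_values (P M.+1 - k).
  have := P_inj (P M.+1 - k) M.+1; rewrite /k in kP *; lia.
have := above_reverse x; have := decr_gap _ _ _ decr_after_max M.+1 x.
rewrite /k in PMk; lia.
Qed.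

Lemma two_block_from_max : [/\ N <= 2 * k, k <= N & two_block N k P].
Proof.
split; first by have := prefix_short; rewrite /k; lia.
  by rewrite /k; lia.
move=> i iN; case: ifP => iM.
  have [-> | ltiM] : i = M \/ i < M by rewrite /k in iM; lia.
    by rewrite PM /k; lia.
  exact: prefix_values.
by apply: suffix_values; rewrite /k in iM; lia.
Qed.

End StronglyAvoidingShape.

Lemma strongly_avoiding_two_block N (P : nat -> nat) :
  (forall i, i < N -> P i < N) ->
  (forall i j, i < N -> j < N -> P i = P j -> i = j) ->
  (forall v, v < N -> exists2 i, i < N & P i = v) ->
  0 < N -> P (N - 1) = 0 ->
  avoids312 N P -> avoids312 N (fun i => P (P i)) ->
  exists k, [/\ N <= 2 * k, k <= N & two_block N k P].
Proof.
move=> P_lt P_inj P_surj N_gt0 P_last avP avPP.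
have [N1|N_gt1] : N = 1 \/ 1 < N by lia.
  exists 1; rewrite N1 in P_last *; split => // i.
  by rewrite ltnS leqn0 => /eqP ->.
have [M M_lt PM] := P_surj (N - 1) ltac:(lia).
by exists (N - 1 - M); apply: two_block_from_max M_lt PM.
Qed.

(* Backward direction on words: the two-block word and its square, which
   swaps the two blocks' roles, contain no 312. *)
Lemma two_block_strongly_avoids N k (P : nat -> nat) :
  N <= 2 * k -> k <= N -> two_block N k P ->
  avoids312 N P /\ avoids312 N (fun i => P (P i)).
Proof.
move=> Nk kN P_def.
have PP_def i : i < N -> P (P i) =
    if i < N - k then N - 1 - (k + i)
    else if N - 1 - i < N - k then k + (N - 1 - i) else i.
  move=> iN; rewrite (P_def i iN).
  by case: ifP => iK; rewrite P_def; try lia; repeat case: ifP; lia.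
split=> i j l ij jl lN.
  by rewrite !P_def; try lia; repeat case: ifP; lia.
by rewrite !PP_def; try lia; repeat case: ifP; lia.
Qed.

Lemma avoids312_eq N (f g : nat -> nat) :
  f =1 g -> avoids312 N f <-> avoids312 N g.
Proof.
by move=> fg; split=> av i j l; [rewrite -!fg | rewrite !fg]; apply: av.
Qed.

Definition word {n} (p : {perm 'I_n.+1}) (i : nat) : nat :=
  nat_of_ord (p (inord i)).

Lemma word_lt n (p : {perm 'I_n.+1}) i : word p i < n.+1.
Proof. exact: ltn_ord. Qed.

Lemma word_inj n (p : {perm 'I_n.+1}) i j :
  i < n.+1 -> j < n.+1 -> word p i = word p j -> i = j.
Proof.
move=> iN jN /val_inj /perm_inj /(congr1 val) /=.
by rewrite !inordK.
Qed.

Lemma word_surj n (p : {perm 'I_n.+1}) v :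
  v < n.+1 -> exists2 i, i < n.+1 & word p i = v.
Proof.
move=> vN; exists (val ((p^-1)%g (inord v))); first exact: ltn_ord.
by rewrite /word inord_val permKV /= inordK.
Qed.

Lemma word_mul n (p q : {perm 'I_n.+1}) i :
  word (p * q)%g i = word q (word p i).
Proof. by rewrite /word permM inord_val. Qed.

Lemma perm_val_word n (p : {perm 'I_n.+1}) i :
  i < n.+1 -> perm_val p i = (word p i).+1.
Proof.
move=> iN; rewrite /perm_val /word.
by case: insubP => [j _ <- | ]; rewrite ?inord_val ?iN.
Qed.

Lemma avoids_word n (p : {perm 'I_n.+1}) :
  avoids p [:: 3; 1; 2] <-> avoids312 n.+1 (word p).
Proof.
split=> [av i j l ij jl lN lt_jl lt_li | av [f [f_incr f_pat]]].
  apply: av; exists (fun r : 'I_3 => inord (nth 0 [:: i; j; l] r)); split.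
    by case=> [[|[|[|r]]] hr] // [[|[|[|s]]] hs] //= _; rewrite !inordK //; lia.
  move: lt_jl lt_li; rewrite /word => lt_jl lt_li.
  by case=> [[|[|[|r]]] hr] // [[|[|[|s]]] hs] //=; rewrite ?ltnn //; lia.
pose o (r : nat) (hr : r < 3) : 'I_(size [:: 3; 1; 2]) := Ordinal hr.
apply: (av (f (o 0 isT)) (f (o 1 isT)) (f (o 2 isT))); rewrite /word ?inord_val.
- exact: f_incr.
- exact: f_incr.
- exact: ltn_ord.
- by rewrite f_pat.
- by rewrite f_pat.
Qed.

Lemma strongly_avoids_word n (p : {perm 'I_n.+1}) :
  strongly_avoids p [:: 3; 1; 2] <->
  avoids312 n.+1 (word p) /\ avoids312 n.+1 (fun i => word p (word p i)).
Proof.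
by rewrite /strongly_avoids !avoids_word (avoids312_eq _ _ _ (word_mul _ p p)).
Qed.

Theorem theorem3p1 (n : nat) (p : {perm 'I_n}) :
  1 <= n ->
  perm_val p n.-1 = 1 ->
  (strongly_avoids p [:: 3; 1; 2] <->
   exists k : nat,
     [/\ n <= 2 * k, k <= n &
      forall i : nat, i < n ->
        perm_val p i = (if i < n - k then k + i + 1 else n - i)]).
Proof.
case: n p => [//|n] p _ p_last.
have word_last : word p (n.+1 - 1) = 0.
  by move: p_last; rewrite subn1 perm_val_word // => -[].
have shape_word k : two_block n.+1 k (word p) <->
    forall i, i < n.+1 ->
      perm_val p i = (if i < n.+1 - k then k + i + 1 else n.+1 - i).
  by split=> shape i iN; have := shape i iN; rewrite perm_val_word //;
    case: ifP; lia.
rewrite strongly_avoids_word; split.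
  case=> avP avPP.
  have [k [Nk kN shape]] := strongly_avoiding_two_block _ _
    (fun i _ => word_lt _ p i) (word_inj _ p) (word_surj _ p) (ltn0Sn n)
    word_last avP avPP.
  by exists k; split=> //; apply/shape_word.
case=> k [Nk kN shape].
by apply: (two_block_strongly_avoids _ k) => //; apply/shape_word.
Qed.
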